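(* Let $P=P(G,[\omega])$ be a toric poset over $G=(V,E)$, let $i,j\in V$, and suppose the toric interval $I=[i,j]^{\mathrm{tor}}$ satisfies $|I|\ge3$. Then \[[i,j]^{\mathrm{tor}}=\{i,j\}\cup\{k\in V: [w|_{\{i,j,k\}}]=[(i,k,j)] \text{ for all } [w]\in\mathcal{L}_{\mathrm{tor}}(P)\}.\]
   Context: Toric poset setup: $V=[n]$; $\mathrm{Acyc}(G)$ acyclic orientations; $[\omega]$ the class under the equivalence generated by converting a source into a sink; toric chambers of the toric graphic arrangement (components of $\mathbb{R}^V/\mathbb{Z}^V$ minus the hyperplanes $\{x_i\equiv x_j\bmod 1\}$, $\{i,j\}\in E$) correspond bijectively to the classes $[\omega]$ (a point $x$ with coordinates in $[0,1)$ gives $i\to j$ iff $x_i<x_j$); $P(G,[\omega])$ is identified with its chamber $c(P)$. Toric chain: $C=\{i_1,\dots,i_m\}\subseteq V$ is a toric chain of $P$ if there is a cyclic equivalence class $[(i_1,\dots,i_m)]$ of linear orderings of $C$ such that for every $x\in c(P)$ (coordinates in $[0,1)$) some cyclic shift $(j_1,\dots,j_m)$ satisfies $0\le x_{j_1}<\cdots<x_{j_m}<1$; we write $P|_C=[(i_1,\dots,i_m)]$. Toric interval: $[i,i]^{\mathrm{tor}}=\{i\}$; for $i\neq j$, $[i,j]^{\mathrm{tor}}=\emptyset$ if $\{i,j\}$ is not a toric chain, and otherwise $[i,j]^{\mathrm{tor}}=\{i,j\}\cup\{k\in V: P|_{\{i,j,k\}}=[(i,k,j)]\}$. A toric poset $P'$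 on $V$ is a total toric extension of $P$ if $c(P')\subseteq c(P)$ and $c(P')$ is a chamber of the toric arrangement of the complete graph $K_V$; such $P'$ are indexed by cyclic classes $[w]=[(w_1,\dots,w_n)]$ of permutations of $V$ (the chamber where $0\le x_{w_1}<\dots<x_{w_n}<1$ up to cyclic shift). $\mathcal{L}_{\mathrm{tor}}(P)$ is the set of total toric extensions, and $[w|_C]$ denotes the cyclic order induced on $C\subseteq V$. *)

From HB Require Import structures.
From mathcomp Require Import all_boot all_order all_algebra.
From Stdlib Require Import ClassicalEpsilon.
Set Implicit Arguments. Unset Strict Implicit. Unset Printing Implicit Defensive.
Import Order.TTheory GRing.Theory Num.Theory.
Local Open Scope ring_scope.

Definition asbool (P : Prop) : bool :=
  if excluded_middle_informative P then true else false.

Section Toric.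
Variable n : nat.
(* V = [n] is represented by 'I_n; G is a simple graph given by a symmetric
   irreflexive edge relation (these are hypotheses of the main theorem). *)
Implicit Types (G om : rel 'I_n).

Definition orientation G om : Prop :=
  (forall a b, om a b -> G a b) /\
  (forall a b, G a b -> om a b || om b a) /\
  (forall a b, ~~ (om a b && om b a)).

Definition acyc_orientation G om : Prop :=
  orientation G om /\ (forall a b, om a b -> ~~ connect om b a).

Definition is_source om (v : 'I_n) : Prop := forall a, ~~ om a v.

Definition flip_at om (v : 'I_n) : rel 'I_n :=
  fun a b => if (a == v) || (b == v) then om b a else om a b.

Inductive torEquiv : rel 'I_n -> rel 'I_n -> Prop :=
| te_ext om om' : (forall a b, om a b = om' a b) -> torEquiv om om'
| te_flip om om' v : is_source om v ->
    (forall a b, om' a b = flip_at om v a b) -> torEquiv om om'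
| te_sym om om' : torEquiv om om' -> torEquiv om' om
| te_trans om1 om2 om3 : torEquiv om1 om2 -> torEquiv om2 om3 -> torEquiv om1 om3.

Variable R : realFieldType.
Implicit Types (x : 'I_n -> R).

Definition in01 x : Prop := forall a, 0 <= x a /\ x a < 1.

Definition orient_of G x : rel 'I_n := fun a b => G a b && (x a < x b).

(* x (coordinates in [0,1)) lies in the toric chamber c(P(G,[om])) *)
Definition in_chamber G om x : Prop :=
  in01 x /\ (forall a b, G a b -> x a != x b) /\ torEquiv (orient_of G x) om.

Definition cyc_sorted x (s : seq 'I_n) : Prop :=
  exists k, sorted (fun a b => x a < x b) (rot k s).

(* P|_C = [s] where C is the underlying set of s (so C is a toric chain) *)
Definition restricts_to G om (s : seq 'I_n) : Prop :=
  uniq s /\ forall x, in_chamber G om x -> cyc_sorted x s.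

Definition toric_chain2 G om (i j : 'I_n) : Prop :=
  exists s, perm_eq s [:: i; j] /\ restricts_to G om s.

Definition tor_interval G om (i j : 'I_n) : {set 'I_n} :=
  if i == j then [set i]
  else if asbool (toric_chain2 G om i j) then
    [set k | (k == i) || (k == j) || asbool (restricts_to G om [:: i; k; j])]
  else set0.

Definition cyc_eq (s t : seq 'I_n) : Prop := exists r, rot r s = t.

(* [w] is (a representative of) a total toric extension of P(G,[om]):
   w is a permutation of V and the chamber of the complete graph K_V
   determined by [w] is contained in c(P). *)
Definition total_ext G om (w : seq 'I_n) : Prop :=
  perm_eq w (enum 'I_n) /\
  forall x, in01 x -> cyc_sorted x w -> in_chamber G om x.

End Toric.

(* If P|_{i,j,k} = [(i,k,j)] and [w] is a total toric extension, the point
   a |-> index_w(a)/n lies in the chamber of [w], hence in c(P), so w restricts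
   to [(i,k,j)].  Conversely, for x in c(P) sort V by x, breaking ties by a rank
   r: ties only occur between non-adjacent vertices, so the sorted word w
   induces the orientation of x, and a point cyclically sorted along w induces
   that of a rotation of w, which differs from it by source-to-sink flips.  Thus
   [w] is a total toric extension and i, k, j are cyclically ordered weakly by
   x; two tie-breaks that are opposite on {i, j, k} make the order strict. *)

From HB Require Import structures.
From mathcomp Require Import all_boot all_order all_algebra.
From mathcomp Require Import lra.
From Stdlib Require Import ClassicalEpsilon.
Import Order.TTheory GRing.Theory Num.Theory.

Set Implicit Arguments. Unset Strict Implicit. Unset Printing Implicit Defensive.

Definition cyc3 (T : Type) (L : rel T) a b c :=
  [|| L a b && L b c, L b c && L c a | L c a && L a b].

Lemma sub_cyc3 (T : Type) (L L' : rel T) a b c :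
  subrel L L' -> cyc3 L a b c -> cyc3 L' a b c.
Proof.
by move=> LL'; case/or3P=> /andP[/LL' h1 /LL' h2]; rewrite /cyc3 h1 h2 ?orbT.
Qed.

Lemma cyc_eq_perm3 n (i j k : 'I_n) t :
  uniq [:: i; j; k] -> perm_eq t [:: i; j; k] ->
  cyc_eq t [:: i; k; j] <-> cyc3 (fun u v => index u t < index v t) i k j.
Proof.
move=> uijk pt; have ut : uniq t by rewrite (perm_uniq pt).
move: uijk; rewrite /= !inE !negb_or => /andP[/andP[/negbTE ij /negbTE ik] /andP[/negbTE jk _]].
have ji : (j == i) = false by rewrite eq_sym.
have ki : (k == i) = false by rewrite eq_sym.
have kj : (k == j) = false by rewrite eq_sym.
have memt := perm_mem pt; move: (perm_size pt).
case: t pt ut memt => [|a [|b [|c [|]]]] //= pt ut memt _.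
have /and3P[ha hb hc] : [&& a \in [:: i; j; k], b \in [:: i; j; k] & c \in [:: i; j; k]].
  by apply/and3P; split; rewrite -memt !inE eqxx ?orbT.
move: ut; clear pt memt; rewrite !inE in ha hb hc *.
case/or3P: ha => /eqP->; case/or3P: hb => /eqP->; case/or3P: hc => /eqP->.
all: rewrite ?eqxx ?ij ?ik ?jk ?ji ?ki ?kj //= => _.
all: split; rewrite /cyc3 /= ?eqxx ?ij ?ik ?jk ?ji ?ki ?kj //=.
all: first [ move=> _; first [by exists 0 | by exists 1 | by exists 2]
           | by case=> [[|[|[|m]]]] /= /eqP; rewrite !eqseq_cons ?ij ?ik ?jk ?ji ?ki ?kj ?andbF ].
Qed.

Lemma sorted_index (T : eqType) (w : seq T) :
  uniq w -> sorted (fun a b => index a w < index b w) w.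
Proof.
case: w => [//|x0 w] uw; apply/pairwise_sorted/(pairwiseP x0) => a b ha hb ab.
by rewrite !index_uniq.
Qed.

Lemma sorted_ltn_indexE (T : eqType) (L : rel T) (s : seq T) :
  transitive L -> (forall a b, L a b -> ~~ L b a) -> sorted L s ->
  {in s &, forall a b, L a b = (index a s < index b s)}.
Proof.
move=> trL asymL sL a b ha hb.
case: ltngtP => [lt_ab|lt_ba|/(index_inj a ha hb)->].
- exact: (sorted_ltn_index trL sL).
- exact/negbTE/asymL/(sorted_ltn_index trL sL).
- by apply/negbTE/negP => Laa; have /negP := asymL b b Laa.
Qed.

Lemma index_filter_ltn (T : eqType) (P : pred T) (w : seq T) :
  uniq w -> {in filter P w &, forall a b,
    (index a (filter P w) < index b (filter P w)) = (index a w < index b w)}.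
Proof.
move=> uw a b ha hb; symmetry.
have trw : transitive (fun a b => index a w < index b w).
  by move=> ? ? ?; apply: ltn_trans.
apply: (sorted_ltn_indexE trw) ha hb.
- by move=> ? ? lt_ab; rewrite -leqNgt ltnW.
- by apply: sorted_filter trw _ _ (sorted_index uw).
Qed.

Lemma cyc_eq_filter3 n (w : seq 'I_n) (i j k : 'I_n) :
  uniq w -> uniq [:: i; j; k] -> {subset [:: i; j; k] <= w} ->
  cyc_eq (filter (fun v => v \in [:: i; j; k]) w) [:: i; k; j] <->
  cyc3 (fun u v => index u w < index v w) i k j.
Proof.
set t := filter _ w => uw uijk sub.
have memt v : (v \in t) = (v \in [:: i; j; k]).
  by rewrite mem_filter; case: (boolP (v \in _)) => // /sub ->.
have pt : perm_eq t [:: i; j; k] by apply: uniq_perm; rewrite ?filter_uniq.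
by rewrite (cyc_eq_perm3 uijk pt) /cyc3 !index_filter_ltn //;
  rewrite memt !inE eqxx ?orbT.
Qed.

Section SeqOrientation.
Variables (n : nat) (G : rel 'I_n).
Hypotheses (Gsym : symmetric G) (Girr : irreflexive G).

Definition seq_orient (s : seq 'I_n) : rel 'I_n :=
  fun a b => G a b && (index a s < index b s).

Lemma torEquiv_seq_orient_rot1 (s : seq 'I_n) :
  uniq s -> (forall v, v \in s) -> torEquiv (seq_orient s) (seq_orient (rot 1 s)).
Proof.
case: s => [_ _|a t /= /andP[a_t _] all_at]; first exact: te_ext.
have mem_t v : v != a -> v \in t by move=> va; have := all_at v; rewrite inE (negbTE va).
have idx_t v : v != a -> index v t < size t by move=> /mem_t; rewrite index_mem.
apply: (@te_flip _ _ _ a) => [b|b c]; first by rewrite /seq_orient /= eqxx ltn0 andbF.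
rewrite rot1_cons -cats1 /seq_orient /flip_at /= !index_cat /=.
case: (eqVneq b a) => [->|ba]; case: (eqVneq c a) => [->|ca];
  rewrite ?eqxx ?(negbTE a_t) //=.
- by rewrite Girr.
- by rewrite mem_t // ltn0 andbF addn0 ltnNge ltnW ?idx_t ?andbF.
- by rewrite mem_t // addn0 idx_t // Gsym.
- by rewrite !mem_t // ltnS.
Qed.

Lemma torEquiv_seq_orient_rot (s : seq 'I_n) m :
  uniq s -> (forall v, v \in s) -> torEquiv (seq_orient s) (seq_orient (rot m s)).
Proof.
move=> us all_s; elim: m => [|m IH]; first by rewrite rot0; apply: te_ext.
case: (leqP (size s) m) => hm; first by rewrite !rot_oversize ?(leqW hm) in IH *.
apply: te_trans IH _; rewrite -add1n rotD //.
by apply: torEquiv_seq_orient_rot1 => [|v]; rewrite ?rot_uniq ?mem_rot.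
Qed.

End SeqOrientation.

Local Open Scope ring_scope.

Lemma cyc_sorted3E (R : realFieldType) n (x : 'I_n -> R) a b c :
  cyc_sorted x [:: a; b; c] <-> cyc3 (fun u v => x u < x v) a b c.
Proof.
rewrite /cyc3; split; last by case/or3P=> h; [exists 0|exists 1|exists 2]; rewrite /= ?andbT.
by case=> [[|[|[|m]]]] /=; rewrite ?andbT => ->; rewrite ?orbT.
Qed.

Lemma sorted_ltr_indexE (R : realFieldType) (T : eqType) (y : T -> R) (s : seq T) :
  sorted (fun u v => y u < y v) s ->
  {in s &, forall a b, (y a < y b) = (index a s < index b s)%N}.
Proof.
apply: sorted_ltn_indexE => [u v w|u v /ltW]; first exact: lt_trans.
by rewrite leNgt.
Qed.

Section Tiebreak.
Variables (R : realFieldType) (n : nat).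

Definition lexr (x : 'I_n -> R) (r : 'I_n -> nat) : rel 'I_n :=
  fun a b => (x a < x b) || ((x a == x b) && (r a <= r b)%N).

Lemma lexr_trans x r : transitive (lexr x r).
Proof.
move=> b a c /orP[h1|/andP[/eqP e1 h1]] /orP[h2|/andP[/eqP e2 h2]]; apply/orP.
- by left; apply: lt_trans h2.
- by left; rewrite -e2.
- by left; rewrite e1.
- by right; rewrite e1 e2 eqxx (leq_trans h1 h2).
Qed.

Lemma lexr_total x r : total (lexr x r).
Proof. by move=> a b; rewrite /lexr; case: ltgtP => //= _; apply: leq_total. Qed.

Definition lexr_sort x r : seq 'I_n := sort (lexr x r) (enum 'I_n).

Lemma mem_lexr_sort x r a : a \in lexr_sort x r.
Proof. by rewrite mem_sort mem_enum. Qed.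

Lemma lexr_of_index_lexr_sort x r (w := lexr_sort x r) :
  subrel (fun u v => index u w < index v w)%N (lexr x r).
Proof.
have sw : sorted (lexr x r) w by apply/sort_sorted/lexr_total.
by move=> u v; apply: (sorted_ltn_index (@lexr_trans x r) sw); apply: mem_lexr_sort.
Qed.

Lemma index_lexr_sort_ltn x r (w := lexr_sort x r) a b :
  x a != x b -> (index a w < index b w)%N = (x a < x b).
Proof.
have lexr_ltn := @lexr_of_index_lexr_sort x r.
have index_w_inj := index_inj a (mem_lexr_sort x r a) (mem_lexr_sort x r b).
move=> xab; case: ltngtP => [/lexr_ltn|/lexr_ltn|/index_w_inj eq_ab].
- by rewrite /lexr (negbTE xab) orbF.
- by rewrite /lexr eq_sym (negbTE xab) orbF => /ltW; rewrite leNgt => /negbTE.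
- by rewrite eq_ab eqxx in xab.
Qed.

(* A tie among i, j, k is broken in opposite directions by the two ranks, and
   the cyclic order (i, k, j) cannot survive both. *)
Lemma cyc3_lexr_tiebreak x (i j k : 'I_n) :
  uniq [:: i; j; k] ->
  cyc3 (lexr x (index^~ [:: i; j; k])) i k j ->
  cyc3 (lexr x (index^~ [:: k; j; i])) i k j ->
  cyc3 (fun u v => x u < x v) i k j.
Proof.
rewrite /= !inE !negb_or => /andP[/andP[/negbTE ij /negbTE ik] /andP[/negbTE jk _]].
have ji : (j == i) = false by rewrite eq_sym.
have ki : (k == i) = false by rewrite eq_sym.
have kj : (k == j) = false by rewrite eq_sym.
rewrite /cyc3 /lexr /= !eqxx ij ik jk ji ki kj /=.
by case: (ltgtP (x i) (x k)); case: (ltgtP (x k) (x j)); case: (ltgtP (x i) (x j)) => //=; lra.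
Qed.

End Tiebreak.

Section TotalExtensions.
Variables (R : realFieldType) (n : nat) (G om : rel 'I_n).

Definition seq_point (w : seq 'I_n) : 'I_n -> R := fun a => (index a w)%:R / n%:R.

Lemma seq_point_ltr w a b :
  (0 < n)%N -> (seq_point w a < seq_point w b) = (index a w < index b w)%N.
Proof. by move=> n_gt0; rewrite ltr_pM2r ?invr_gt0 ?ltr0n // ltr_nat. Qed.

Lemma in01_seq_point w : perm_eq w (enum 'I_n) -> in01 (seq_point w).
Proof.
move=> pw a; split; first by rewrite divr_ge0 ?ler0n.
have n_gt0 : (0 < n)%N by case: n a {pw} => [[]|].
rewrite ltr_pdivrMr ?ltr0n // mul1r ltr_nat.
by have := index_mem a w; rewrite (perm_mem pw) mem_enum (perm_size pw) size_enum_ord.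
Qed.

Lemma cyc_sorted_seq_point w : (0 < n)%N -> uniq w -> cyc_sorted (seq_point w) w.
Proof.
move=> n_gt0 uw; exists 0%N; rewrite rot0.
by apply: sub_sorted (sorted_index uw) => a b; rewrite seq_point_ltr.
Qed.

Lemma cyc3_index_total_ext (i j k : 'I_n) w :
  restricts_to R G om [:: i; k; j] -> total_ext R G om w ->
  cyc3 (fun u v => index u w < index v w)%N i k j.
Proof.
move=> [_ P_ikj] [pw w_P].
have n_gt0 : (0 < n)%N by case: n i {pw w_P P_ikj} => [[]|].
have uw : uniq w by rewrite (perm_uniq pw) enum_uniq.
have /cyc_sorted3E := P_ikj _ (w_P _ (in01_seq_point pw) (cyc_sorted_seq_point n_gt0 uw)).
by rewrite /cyc3 !seq_point_ltr.
Qed.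

Hypotheses (Gsym : symmetric G) (Girr : irreflexive G).

Lemma total_ext_lexr_sort (x : 'I_n -> R) (r : 'I_n -> nat) :
  in_chamber G om x -> total_ext R G om (lexr_sort x r).
Proof.
move=> [_ [xG x_om]]; set w := lexr_sort x r.
have uw : uniq w by rewrite sort_uniq enum_uniq.
have mem_w := mem_lexr_sort x r.
split=> [|y y01 [m sy]]; first by rewrite perm_sort perm_refl.
have mem_s v : v \in rot m w by rewrite mem_rot.
have y_idx := sorted_ltr_indexE sy.
split=> //; split=> [a b Gab|].
  have ab : a != b by apply: contraTneq Gab => ->; rewrite Girr.
  rewrite neq_lt !y_idx ?mem_s // -neq_ltn.
  by apply: contra ab => /eqP/(index_inj a (mem_s a) (mem_s b))->.
have y_rot : torEquiv (orient_of G y) (seq_orient G (rot m w)).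
  by apply: te_ext => a b; rewrite /orient_of /seq_orient y_idx ?mem_s.
have x_w : torEquiv (seq_orient G w) (orient_of G x).
  apply: te_ext => a b; rewrite /orient_of /seq_orient.
  by case Gab: (G a b) => //=; rewrite index_lexr_sort_ltn ?xG.
apply: te_trans y_rot (te_trans (te_sym _) (te_trans x_w x_om)).
exact: torEquiv_seq_orient_rot.
Qed.

Lemma restricts_to_of_cyc3_total_ext (i j k : 'I_n) :
  uniq [:: i; j; k] ->
  (forall w, total_ext R G om w -> cyc3 (fun u v => index u w < index v w)%N i k j) ->
  restricts_to R G om [:: i; k; j].
Proof.
move=> uijk ext_ikj; split.
  move: uijk; rewrite /= !inE !negb_or => /andP[/andP[ij ik] /andP[jk _]].
  by rewrite ij ik eq_sym jk.
move=> x x_P; apply/cyc_sorted3E/cyc3_lexr_tiebreak => //;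
  exact: sub_cyc3 (@lexr_of_index_lexr_sort _ _ x _) (ext_ikj _ (total_ext_lexr_sort _ x_P)).
Qed.

End TotalExtensions.

Local Close Scope ring_scope.

Lemma eq_asbool (P Q : Prop) : (P <-> Q) -> asbool P = asbool Q.
Proof.
rewrite /asbool => -[PQ QP].
by case: excluded_middle_informative => p; case: excluded_middle_informative => q //;
  [case: q; apply: PQ | case: p; apply: QP].
Qed.

Theorem mainTheorem5 (R : realFieldType) (n : nat) (G om : rel 'I_n)
  (Gsym : symmetric G) (Girr : irreflexive G)
  (Hom : acyc_orientation G om) (i j : 'I_n)
  (H3 : 2 < #|tor_interval R G om i j|) :
  tor_interval R G om i j =
  [set k | (k == i) || (k == j) ||
     asbool (forall w, total_ext R G om w ->
               cyc_eq (filter (fun v => v \in [:: i; j; k]) w) [:: i; k; j])].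
Proof.
have ij : i != j.
  by apply: contraTneq H3 => ->; rewrite /tor_interval eqxx cards1.
have chain_ij : asbool (toric_chain2 R G om i j).
  by move: H3; rewrite /tor_interval (negbTE ij); case: asbool; rewrite ?cards0.
rewrite /tor_interval (negbTE ij) chain_ij; apply/setP => k; rewrite !inE.
case: (eqVneq k i) => [//|ki]; case: (eqVneq k j) => [//|kj]; apply: eq_asbool.
have uijk : uniq [:: i; j; k] by rewrite /= !inE !negb_or ij !(eq_sym _ k) ki kj.
have filterE w : total_ext R G om w ->
    cyc_eq (filter (fun v => v \in [:: i; j; k]) w) [:: i; k; j] <->
    cyc3 (fun u v => index u w < index v w)%N i k j.
  move=> [pw _]; apply: cyc_eq_filter3 uijk _ => [|v _].
    by rewrite (perm_uniq pw) enum_uniq.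
  by rewrite (perm_mem pw) mem_enum.
split=> [P_ikj w w_P | ext_ikj].
  by apply/(filterE w w_P); apply: cyc3_index_total_ext P_ikj w_P.
apply: (restricts_to_of_cyc3_total_ext Gsym Girr uijk) => w w_P.
by apply/(filterE w w_P)/ext_ikj.
Qed.
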